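(* Let $G$ be a finitely generated group, let $N_1,N_2$ be normal subgroups of $G$ such that every element of $N_1$ commutes with every element of $N_2$, let $\Gamma_i=G/N_i$ ($i=1,2$), let $Q=G/N_1N_2$, and let $S$ be a non-abelian finite simple group. Then $$|\mathrm{Epi}(G,S)|=|\mathrm{Epi}(\Gamma_1,S)|+|\mathrm{Epi}(\Gamma_2,S)|-|\mathrm{Epi}(Q,S)|.$$
   Context: For a group $G$ and finite group $S$, $\mathrm{Epi}(G,S)$ denotes the set of surjective homomorphisms $G\to S$ (finite when $G$ is finitely generated). *)

From HB Require Import structures.
From mathcomp Require Import all_boot all_fingroup all_solvable.
From Stdlib Require List.

Set Implicit Arguments.
Unset Strict Implicit.
Unset Printing Implicit Defensive.

Record AbsGroup := {
  gcar :> Type;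
  gmul : gcar -> gcar -> gcar;
  gone : gcar;
  ginv : gcar -> gcar;
  gmulA : forall x y z, gmul x (gmul y z) = gmul (gmul x y) z;
  gmul1 : forall x, gmul gone x = x;
  gmulV : forall x, gmul (ginv x) x = gone
}.

Arguments gmul {a} _ _.
Arguments gone {a}.
Arguments ginv {a} _.

Inductive generated (G : AbsGroup) (X : list G) : G -> Prop :=
| gen_one : generated X gone
| gen_in x : List.In x X -> generated X x
| gen_inv x : generated X x -> generated X (ginv x)
| gen_mul x y : generated X x -> generated X y -> generated X (gmul x y).

Definition fin_generated (G : AbsGroup) : Prop :=
  exists X : list G, forall g : G, generated X g.

Definition normal_subgroup (G : AbsGroup) (N : G -> Prop) : Prop :=
  [/\ N gone,
      (forall x y, N x -> N y -> N (gmul x y)),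
      (forall x, N x -> N (ginv x)) &
      (forall g x, N x -> N (gmul (ginv g) (gmul x g)))].

Definition prod_sub (G : AbsGroup) (N1 N2 : G -> Prop) : G -> Prop :=
  fun g => exists a b, [/\ N1 a, N2 b & g = gmul a b].

Definition epi (G : AbsGroup) (gT : finGroupType) (S : {group gT}) (f : G -> gT) : Prop :=
  [/\ (forall x y, f (gmul x y) = (f x * f y)%g),
      (forall x, f x \in S) &
      (forall s, s \in S -> exists x, f x = s)].

(* The quotient G/N has carrier G modulo
   x ~ y iff x^-1 y \in N; a map G/N -> gT is a map G -> gT constant on the
   classes, and the group law / surjectivity are inherited through the
   (surjective) projection G -> G/N. *)
Definition epi_quot (G : AbsGroup) (N : G -> Prop) (gT : finGroupType) (S : {group gT})
    (f : G -> gT) : Prop :=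
  [/\ (forall x y, N (gmul (ginv x) y) -> f x = f y),
      (forall x y, f (gmul x y) = (f x * f y)%g),
      (forall x, f x \in S) &
      (forall s, s \in S -> exists x, f x = s)].

Definition card_is (A B : Type) (P : (A -> B) -> Prop) (n : nat) : Prop :=
  exists l : list (A -> B),
    [/\ List.length l = n, List.NoDup l & forall f, P f <-> List.In f l].

From Pilot Require Import Defs.
From HB Require Import structures.
From mathcomp Require Import all_boot all_fingroup all_solvable.
From mathcomp Require Import boolp zify.

(* An epimorphism G/N ->> S is the same thing as an epimorphism f : G ->> S
   that is trivial on N (epi_quotE).  For an epimorphism f : G ->> S and a
   normal subgroup N of G, f(N) is a normal subgroup of S, hence trivial or
   all of S by simplicity (epi_image_normal).  If N1 and N2 commute and f
   were onto S on both, S would be abelian; so every epimorphism is trivial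
   on N1 or on N2 (epi_trivial_on_one), and it is trivial on N1 N2 exactly
   when it is trivial on both.  Pointwise, therefore (epi_indicator),
       [f : G ->> S] + [f : Q ->> S] = [f : G/N1 ->> S] + [f : G/N2 ->> S].
   Since G is finitely generated, a homomorphism G -> gT is determined by the
   images of the generators, so all homomorphisms lie in one finite list
   (hom_finite); counting the four sets by filtering that list and summing
   the pointwise identity gives the theorem. *)

Set Implicit Arguments.
Unset Strict Implicit.
Unset Printing Implicit Defensive.

Section GroupFacts.
Variable G : AbsGroup.

(* The record only provides left axioms; the right ones follow. *)
Lemma gmulVr (x : G) : gmul x (ginv x) = gone.
Proof.
have idem : gmul (gmul x (ginv x)) (gmul x (ginv x)) = gmul x (ginv x).
  by rewrite -gmulA [gmul (ginv x) _]gmulA gmulV gmul1.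
by rewrite -[LHS]gmul1 -(gmulV (gmul x (ginv x))) -gmulA idem.
Qed.

Lemma gmulr1 (x : G) : gmul x gone = x.
Proof. by rewrite -(gmulV x) gmulA gmulVr gmul1. Qed.

End GroupFacts.

Definition is_hom (G : AbsGroup) (gT : finGroupType) (f : G -> gT) : Prop :=
  forall x y, f (gmul x y) = (f x * f y)%g.

Definition trivial_on (G : AbsGroup) (gT : finGroupType) (N : G -> Prop)
    (f : G -> gT) : Prop :=
  forall n, N n -> f n = 1%g.

Section Homomorphisms.
Variables (G : AbsGroup) (gT : finGroupType) (f : G -> gT).
Hypothesis fM : is_hom f.

Lemma hom1 : f gone = 1%g.
Proof.
have e := fM gone gone; rewrite gmul1 in e.
by rewrite -(mulKg (f gone) (f gone)) -e mulVg.
Qed.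

Lemma homV x : f (ginv x) = (f x)^-1%g.
Proof.
have e := fM (ginv x) x; rewrite gmulV hom1 in e.
by rewrite -(mulgK (f x) (f (ginv x))) -e mul1g.
Qed.

Lemma trivial_on_prod (N1 N2 : G -> Prop) :
  N1 gone -> N2 gone ->
  trivial_on (prod_sub N1 N2) f <-> trivial_on N1 f /\ trivial_on N2 f.
Proof.
move=> N1_1 N2_1; split.
  move=> triv; split=> n Nn; apply: triv.
    by exists n, gone; rewrite gmulr1.
  by exists gone, n; rewrite gmul1.
by case=> triv1 triv2 _ [a [b [Na Nb ->]]]; rewrite fM triv1 // triv2 // mulg1.
Qed.

End Homomorphisms.

Lemma hom_eq_on_generators (G : AbsGroup) (gT : finGroupType) (f g : G -> gT)
    (X : list G) :
  is_hom f -> is_hom g -> (forall x, List.In x X -> f x = g x) ->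
  forall y, Defs.generated X y -> f y = g y.
Proof.
move=> fM gM eqX y; elim=> [|x /eqX //|x _ e|x z _ e1 _ e2].
- by rewrite (hom1 fM) (hom1 gM).
- by rewrite (homV fM) (homV gM) e.
- by rewrite fM gM e1 e2.
Qed.

Lemma epi_quotE (G : AbsGroup) (gT : finGroupType) (S : {group gT})
    (N : G -> Prop) (f : G -> gT) :
  epi_quot N S f <-> epi S f /\ trivial_on N f.
Proof.
split.
  case=> fK fM fS fsurj; split=> // n Nn.
  have e : f gone = f (gmul gone n) by apply: fK; rewrite gmulA gmulV gmul1.
  by rewrite fM in e; rewrite -(mulKg (f gone) (f n)) -e mulVg.
case=> [[fM fS fsurj] triv]; split=> // x y Nxy.
have := triv _ Nxy; rewrite fM (homV fM) => e.
by rewrite -(mulKVg (f x) (f y)) e mulg1.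
Qed.

Section NormalImage.
Variables (G : AbsGroup) (gT : finGroupType) (S : {group gT}).
Variables (N : G -> Prop) (f : G -> gT).
Hypotheses (f_epi : epi S f) (N_normal : normal_subgroup N).

Definition image_set : {set gT} := [set s | `[< exists n, N n /\ f n = s >]].

Lemma image_setP s : reflect (exists n, N n /\ f n = s) (s \in image_set).
Proof. by rewrite inE; apply: asboolP. Qed.

Lemma image_group_set : group_set image_set.
Proof.
have [fM _ _] := f_epi; have [N_1 NM _ _] := N_normal.
apply/group_setP; split.
  by apply/image_setP; exists gone; rewrite (hom1 fM).
move=> _ _ /image_setP [a [Na <-]] /image_setP [b [Nb <-]].
by apply/image_setP; exists (gmul a b); split; [apply: NM | rewrite fM].
Qed.

Canonical image_group := Group image_group_set.

Lemma image_normal : (image_group <| S)%g.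
Proof.
have [fM fS fsurj] := f_epi; have [_ _ _ NJ] := N_normal.
have sub : image_group \subset S by apply/subsetP => _ /image_setP [a [_ <-]].
rewrite /normal sub; apply/subsetP => s Ss; have [g <-] := fsurj s Ss.
rewrite inE; apply/subsetP => _ /imsetP [_ /image_setP [a [Na <-]] ->].
apply/image_setP; exists (gmul (ginv g) (gmul a g)).
by split; [apply: NJ | rewrite !fM (homV fM)].
Qed.

Lemma epi_image_normal :
  simple S -> trivial_on N f \/ (forall s, s \in S -> exists n, N n /\ f n = s).
Proof.
case/simpleP=> _ /(_ _ image_normal) [] e.
  left => n Nn; have : f n \in image_group by apply/image_setP; exists n.
  by rewrite e => /set1P.
by right => s Ss; apply/image_setP; rewrite -[image_set]/(gval image_group) e.
Qed.

End NormalImage.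

Lemma epi_trivial_on_one (G : AbsGroup) (gT : finGroupType) (S : {group gT})
    (N1 N2 : G -> Prop) (f : G -> gT) :
  epi S f -> normal_subgroup N1 -> normal_subgroup N2 ->
  (forall a b, N1 a -> N2 b -> gmul a b = gmul b a) ->
  simple S -> ~~ abelian S -> trivial_on N1 f \/ trivial_on N2 f.
Proof.
move=> f_epi N1_normal N2_normal comm simS nabS.
case: (epi_image_normal f_epi N1_normal simS) => [|onto1]; first by left.
case: (epi_image_normal f_epi N2_normal simS) => [|onto2]; first by right.
case/negP: nabS; apply/centsP => _ /onto1 [a [Na <-]] _ /onto2 [b [Nb <-]].
by have [fM _ _] := f_epi; rewrite /commute -!fM comm.
Qed.

Lemma epi_indicator (G : AbsGroup) (gT : finGroupType) (S : {group gT})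
    (N1 N2 : G -> Prop) (f : G -> gT) :
  normal_subgroup N1 -> normal_subgroup N2 ->
  (forall a b, N1 a -> N2 b -> gmul a b = gmul b a) ->
  simple S -> ~~ abelian S ->
  `[< epi S f >] + `[< epi_quot (prod_sub N1 N2) S f >] =
  `[< epi_quot N1 S f >] + `[< epi_quot N2 S f >].
Proof.
move=> N1_normal N2_normal comm simS nabS.
have [N1_1 _ _ _] := N1_normal; have [N2_1 _ _ _] := N2_normal.
have one_side : epi S f -> trivial_on N1 f \/ trivial_on N2 f.
  by move=> f_epi; apply: (epi_trivial_on_one f_epi).
have both : epi S f -> trivial_on (prod_sub N1 N2) f <->
    trivial_on N1 f /\ trivial_on N2 f.
  by case=> fM _ _; apply: trivial_on_prod.
have q1 := @epi_quotE G gT S N1 f; have q2 := @epi_quotE G gT S N2 f.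
have q12 := @epi_quotE G gT S (prod_sub N1 N2) f.
by do 4![case: asboolP => ?] => //=; tauto.
Qed.

Lemma In_map_mem (T : eqType) (B : Type) (g : T -> B) (s : seq T) (t : T) :
  t \in s -> List.In (g t) (map g s).
Proof. by elim: s => //= y s IH; rewrite in_cons => /orP [/eqP ->|/IH]; auto. Qed.

Lemma map_eq_In (A B : Type) (f g : A -> B) (X : list A) (x : A) :
  map f X = map g X -> List.In x X -> f x = g x.
Proof. by elim: X => //= a l IH [eq_a eq_l] [<-|/(IH eq_l)]. Qed.

(* A finitely generated group has only finitely many homomorphisms into a
   finite group: each one is determined by the tuple of images of the
   generators, and there are finitely many such tuples. *)
Lemma hom_finite (G : AbsGroup) (gT : finGroupType) :
  fin_generated G ->
  exists U : list (G -> gT), List.NoDup U /\ forall f, is_hom f -> List.In f U.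
Proof.
case=> X genX.
pose hom_with (t : seq gT) : G -> gT :=
  if pselect (exists f, is_hom f /\ map f X = t) is left h then sval (cid h)
  else fun _ => 1%g.
pose homs := [seq hom_with (val t) | t <- enum {: (size X).-tuple gT}].
exists (List.nodup (fun f g : G -> gT => pselect (f = g)) homs).
split=> [|f fM]; first exact: List.NoDup_nodup.
have sz : size (map f X) == size X by rewrite size_map.
have -> : f = hom_with (map f X).
  rewrite /hom_with; case: pselect => [h|[]]; last by exists f.
  case: cid => g [gM eqX] /=; apply: funext => y.
  apply: (hom_eq_on_generators fM gM _ (genX y)) => x Xx.
  exact: map_eq_In (esym eqX) Xx.
apply/List.nodup_In; rewrite -[map f X]/(val (Tuple sz)).
by apply: In_map_mem; rewrite mem_enum.
Qed.

Lemma card_is_filter (A B : Type) (U : list (A -> B)) (P : (A -> B) -> Prop) :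
  List.NoDup U -> (forall f, P f -> List.In f U) ->
  card_is P (List.length (List.filter (fun f => `[< P f >]) U)).
Proof.
move=> Uuniq PU; exists (List.filter (fun f => `[< P f >]) U).
split=> //; first exact: List.NoDup_filter.
move=> f; rewrite List.filter_In; split; last by case=> _ /asboolP.
by move=> Pf; split; [apply: PU | apply/asboolP].
Qed.

Lemma length_filter_add (T : Type) (a b c d : T -> bool) (U : list T) :
  (forall x, a x + d x = b x + c x) ->
  List.length (List.filter a U) + List.length (List.filter d U) =
  List.length (List.filter b U) + List.length (List.filter c U).
Proof.
move=> pointwise; elim: U => //= x U IH; have := pointwise x.
by case: (a x); case: (b x); case: (c x); case: (d x) => /= e; lia.
Qed.

Theorem mainTheorem4 (G : AbsGroup) (gT : finGroupType) (S : {group gT})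
    (N1 N2 : G -> Prop) :
  fin_generated G ->
  normal_subgroup N1 -> normal_subgroup N2 ->
  (forall a b, N1 a -> N2 b -> gmul a b = gmul b a) ->
  simple S -> ~~ abelian S ->
  exists n n1 n2 nq : nat,
    [/\ card_is (@epi G gT S) n,
        card_is (epi_quot N1 S) n1,
        card_is (epi_quot N2 S) n2,
        card_is (epi_quot (prod_sub N1 N2) S) nq &
        n + nq = n1 + n2].
Proof.
move=> fg N1_normal N2_normal comm simS nabS.
have [U [Uuniq Uhoms]] := hom_finite gT fg.
have epi_in_U f : epi S f -> List.In f U by case=> fM _ _; apply: Uhoms.
have quot_in_U N f : epi_quot N S f -> List.In f U.
  by move/epi_quotE=> [/epi_in_U].
do 4!eexists; split.
- exact: card_is_filter Uuniq epi_in_U.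
- exact: card_is_filter Uuniq (quot_in_U N1).
- exact: card_is_filter Uuniq (quot_in_U N2).
- exact: card_is_filter Uuniq (quot_in_U _).
by apply: length_filter_add => f; apply: epi_indicator.
Qed.
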